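(* Let $(X,\mathrm{dist})$ be a metric space, $\Sigma$ a metric space, and $\{U_\sigma(t,\tau)\}_{\sigma\in\Sigma}$ a family of processes on $X$. Then: (i) $A^\star_\Sigma$ is contained in every closed uniformly attracting set. (ii) For every bounded set $C\subset X$, $\omega_\Sigma(C)\subset A^\star_\Sigma$; moreover $A^\star_\Sigma=\bigcup\omega_\Sigma(C)$, the union taken over all bounded sets $C\subset X$. (iii) If the family is uniformly dissipative, then for every bounded uniformly absorbing set $B$ and every bounded set $C$ we have $\omega_\Sigma(C)\subset\omega_\Sigma(B)=A^\star_\Sigma$; in particular $A^\star_\Sigma$ is closed in $X$.
   Context: A process on $X$ is a family of maps $U(t,\tau):X\to X$, indexed by reals $t\ge\tau$, with $U(\tau,\tau)=\mathrm{id}_X$ and $U(t,\tau)=U(t,s)U(s,\tau)$ for $t\ge s\ge\tau$; no continuity is assumed. For nonempty $B,C\subset X$, $\delta_X(B,C)=\sup_{x\in B}\inf_{\xi\in C}\mathrm{dist}(x,\xi)$. A set $K\subset X$ is uniformly attracting if for every bounded $C\subset X$, $\lim_{t-\tau\to\infty}\sup_{\sigma\in\Sigma}\delta_X(U_\sigma(t,\tau)C,K)=0$. A set $B\subset X$ is uniformly absorbing if for every bounded $C\subset X$ there is $t_e=t_e(C)$ with $U_\sigma(t,\tau)C\subset B$ for all $\sigma\in\Sigma$ whenever $t-\tau\ge t_e$. The family is uniformly dissipative if it has a bounded uniformly absorbing set. $\mathfrak{C}_\Sigma$ is the collection of all sequences $y_n=U_{\sigma_n}(t_n,\tau_n)x_n$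 with $x_n$ a bounded sequence in $X$, $\sigma_n\in\Sigma$, $t_n-\tau_n\to\infty$. For $y_n\in\mathfrak{C}_\Sigma$, $L_\Sigma(y_n)=\{x\in X: y_n\to x \text{ along some subsequence}\}$. $A^\star_\Sigma=\{x\in X: y_n\to x$ along a subsequence, for some $y_n\in\mathfrak{C}_\Sigma\}$. For bounded $C\subset X$, $\omega_\Sigma(C)=\bigcap_{h\ge0}\overline{\bigcup_{\sigma\in\Sigma}\bigcup_{t-\tau\ge h}U_\sigma(t,\tau)C}$ (closure in $X$). These sets may be empty. *)

From Stdlib Require Import Reals.
Open Scope R_scope.

Record MetricSpace := {
  carrier :> Type;
  dist : carrier -> carrier -> R;
  dist_nonneg : forall x y, 0 <= dist x y;
  dist_eq0 : forall x y, dist x y = 0 <-> x = y;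
  dist_sym : forall x y, dist x y = dist y x;
  dist_tri : forall x y z, dist x z <= dist x y + dist y z
}.

Section Defs.
Variable X : MetricSpace.
Variable Sigma : Type.
Variable U : Sigma -> R -> R -> X -> X.  (* U sigma t tau *)

(* each U sigma is a process (no continuity assumed) *)
Definition is_process_family : Prop :=
  forall s : Sigma,
    (forall tau x, U s tau tau x = x) /\
    (forall t r tau x, r <= t -> tau <= r -> U s t tau x = U s t r (U s r tau x)).

Definition mbounded (C : X -> Prop) : Prop :=
  exists x0 : X, exists r : R, forall x, C x -> dist X x0 x <= r.

Definition mclosure (S : X -> Prop) : X -> Prop :=
  fun x => forall eps, 0 < eps -> exists y, S y /\ dist X x y < eps.

Definition mclosed (S : X -> Prop) : Prop := forall x, mclosure S x -> S x.

(* lim_{t-tau -> oo} sup_sigma delta_X(U_sigma(t,tau) C, K) = 0, written out *)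
Definition unif_attracting (K : X -> Prop) : Prop :=
  forall C, mbounded C ->
  forall eps, 0 < eps -> exists T : R, forall (s : Sigma) t tau, t - tau >= T ->
    forall x, C x -> exists xi, K xi /\ dist X (U s t tau x) xi < eps.

Definition unif_absorbing (B : X -> Prop) : Prop :=
  forall C, mbounded C -> exists te : R, forall (s : Sigma) t tau, t - tau >= te ->
    forall x, C x -> B (U s t tau x).

Definition unif_dissipative : Prop :=
  exists B, mbounded B /\ unif_absorbing B.

Definition seq_converges (y : nat -> X) (l : X) : Prop :=
  forall eps, 0 < eps -> exists N, forall n, (n >= N)%nat -> dist X (y n) l < eps.

Definition subseq_converges (y : nat -> X) (l : X) : Prop :=
  exists phi : nat -> nat, (forall n, (phi n < phi (S n))%nat) /\
    seq_converges (fun n => y (phi n)) l.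

Definition in_CSigma (y : nat -> X) : Prop :=
  exists (x : nat -> X) (s : nat -> Sigma) (t tau : nat -> R),
    mbounded (fun z => exists n, z = x n) /\
    (forall M, exists N, forall n, (n >= N)%nat -> t n - tau n >= M) /\
    (forall n, y n = U (s n) (t n) (tau n) (x n)).

Definition L_Sigma (y : nat -> X) : X -> Prop := fun l => subseq_converges y l.

Definition Astar : X -> Prop :=
  fun l => exists y, in_CSigma y /\ L_Sigma y l.

Definition omega (C : X -> Prop) : X -> Prop :=
  fun l => forall h, 0 <= h ->
    mclosure (fun z => exists (s : Sigma) t tau x,
                t - tau >= h /\ C x /\ z = U s t tau x) l.
End Defs.

(* Every point of A*_Sigma is the limit of samples U_(s_n)(t_n, tau_n) x_n with x_n in the bounded
   set C = {x_n}, so it lies in omega_Sigma(C); conversely a point of omega_Sigma(C) is approximated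
   to within 1/(n+1) by such a sample with t - tau >= n, and these samples form a sequence in
   C_Sigma.  Hence A*_Sigma is the union of the omega-limit sets, and each omega-limit set lies in
   every closed uniformly attracting set.  For an absorbing set B, a sample U(t, tau) x with x in C
   and a long time gap factors through U(tau + t_e, tau) x, which lies in B, so
   omega_Sigma(C) is contained in the closed set omega_Sigma(B). *)

From Pilot Require Import Defs.
From Stdlib Require Import Reals Lra Lia ClassicalEpsilon.
Open Scope R_scope.

Lemma exists_nat_gt (A : R) : exists N : nat, A < INR N.
Proof. destruct (INR_archimed 1 A) as [n Hn]; [lra|]. exists n; lra. Qed.

Lemma Rinv_INR_succ_eventually_lt (eps : R) :
  0 < eps -> exists N : nat, forall n, (n >= N)%nat -> / (INR n + 1) < eps.
Proof.
  intros Heps. destruct (exists_nat_gt (/ eps)) as [N HN]. exists N. intros n Hn.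
  apply le_INR in Hn.
  assert (Hinv : 0 < / eps) by (apply Rinv_0_lt_compat; lra).
  replace eps with (/ / eps) by (field; lra).
  apply Rinv_lt_contravar; [apply Rmult_lt_0_compat|]; lra.
Qed.

Lemma strict_incr_ge_id (phi : nat -> nat) :
  (forall n, (phi n < phi (S n))%nat) -> forall n, (n <= phi n)%nat.
Proof. intros Hphi n. induction n as [|n IH]; [lia|]. specialize (Hphi n). lia. Qed.

Section OmegaLimits.
Variable X : MetricSpace.
Variable Sig : MetricSpace.
Variable U : Sig -> R -> R -> X -> X.

Lemma mclosure_mclosed (S : X -> Prop) : mclosed X (mclosure X S).
Proof.
  intros x Hx eps Heps.
  destruct (Hx (eps / 2)) as [y [Hy Hxy]]; [lra|].
  destruct (Hy (eps / 2)) as [z [Hz Hyz]]; [lra|].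
  exists z. split; [exact Hz|]. pose proof (Defs.dist_tri X x y z). lra.
Qed.

Lemma omega_mclosed (C : X -> Prop) : mclosed X (omega X Sig U C).
Proof.
  intros x Hx h Hh. apply mclosure_mclosed.
  intros eps Heps. destruct (Hx eps Heps) as [y [Hy Hxy]]. exists y. split; auto.
Qed.

Lemma mclosed_iff (S T : X -> Prop) :
  (forall x, S x <-> T x) -> mclosed X S -> mclosed X T.
Proof.
  intros HST HS x Hx. apply HST, HS. intros eps Heps.
  destruct (Hx eps Heps) as [y [Hy Hxy]]. exists y. split; [apply HST|]; assumption.
Qed.

Lemma Astar_omega_initial_data (x : X) :
  Astar X Sig U x -> exists C, mbounded X C /\ omega X Sig U C x.
Proof.
  intros [y [[xs [s [t [tau [Hbnd [Hgap Hy]]]]]] [phi [Hphi Hconv]]]].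
  exists (fun z => exists n, z = xs n). split; [exact Hbnd|].
  intros h _ eps Heps.
  destruct (Hgap h) as [N1 HN1]. destruct (Hconv eps Heps) as [N2 HN2].
  pose proof (strict_incr_ge_id phi Hphi (Nat.max N1 N2)) as Hphi_ge.
  set (m := phi (Nat.max N1 N2)).
  exists (y m). split.
  - exists (s m), (t m), (tau m), (xs m).
    split; [apply HN1; lia|]. split; [eauto|apply Hy].
  - rewrite Defs.dist_sym. apply HN2. lia.
Qed.

Record orbit_sample := {
  smp_sigma : Sig;
  smp_t : R;
  smp_tau : R;
  smp_x : X
}.

Definition smp_value (p : orbit_sample) : X :=
  U (smp_sigma p) (smp_t p) (smp_tau p) (smp_x p).

Lemma omega_Astar (C : X -> Prop) :
  mbounded X C -> forall x, omega X Sig U C x -> Astar X Sig U x.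
Proof.
  intros HC x Hx.
  assert (Hsample : forall n : nat, exists p : orbit_sample,
    smp_t p - smp_tau p >= INR n /\ C (smp_x p) /\
    Defs.dist X x (smp_value p) < / (INR n + 1)).
  { intro n.
    assert (Hpos : 0 < / (INR n + 1))
      by (apply Rinv_0_lt_compat; pose proof (pos_INR n); lra).
    destruct (Hx (INR n) (pos_INR n) _ Hpos)
      as [z [[s [t [tau [x' [Hgap [Hx' ->]]]]]] Hxz]].
    exists {| smp_sigma := s; smp_t := t; smp_tau := tau; smp_x := x' |}. auto. }
  destruct (choice _ Hsample) as [p Hp].
  exists (fun n => smp_value (p n)). split.
  - exists (fun n => smp_x (p n)), (fun n => smp_sigma (p n)),
      (fun n => smp_t (p n)), (fun n => smp_tau (p n)).
    split; [|split; [|reflexivity]].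
    + destruct HC as [x0 [r Hr]]. exists x0, r. intros z [n ->]. apply Hr, Hp.
    + intro M. destruct (exists_nat_gt M) as [N HN]. exists N. intros n Hn.
      apply le_INR in Hn. destruct (Hp n) as [Hgap _]. lra.
  - exists (fun n => n). split; [intro; lia|].
    intros eps Heps. destruct (Rinv_INR_succ_eventually_lt eps Heps) as [N HN].
    exists N. intros n Hn. destruct (Hp n) as [_ [_ Hxn]].
    rewrite Defs.dist_sym. specialize (HN n Hn). lra.
Qed.

Lemma omega_sub_attracting (K C : X -> Prop) :
  mclosed X K -> unif_attracting X Sig U K -> mbounded X C ->
  forall x, omega X Sig U C x -> K x.
Proof.
  intros HK Hatt HC x Hx. apply HK. intros eps Heps.
  destruct (Hatt C HC (eps / 2)) as [T HT]; [lra|].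
  destruct (Hx (Rmax T 0) (Rmax_r T 0) (eps / 2))
    as [z [[s [t [tau [x' [Hgap [Hx' ->]]]]]] Hxz]]; [lra|].
  destruct (HT s t tau) with (x := x') as [xi [Hxi Hzxi]]; auto.
  { pose proof (Rmax_l T 0). lra. }
  exists xi. split; [exact Hxi|].
  pose proof (Defs.dist_tri X x (U s t tau x') xi). lra.
Qed.

Hypothesis HU : is_process_family X Sig U.

Lemma omega_sub_omega_absorbing (B C : X -> Prop) :
  unif_absorbing X Sig U B -> mbounded X C ->
  forall x, omega X Sig U C x -> omega X Sig U B x.
Proof.
  intros Habs HC x Hx h Hh eps Heps.
  destruct (Habs C HC) as [te Hte].
  set (m := Rmax te 0).
  assert (Hte_m : te <= m) by apply Rmax_l.
  assert (Hm : 0 <= m) by apply Rmax_r.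
  destruct (Hx (h + m) ltac:(lra) eps Heps)
    as [z [[s [t [tau [x' [Hgap [Hx' ->]]]]]] Hxz]].
  exists (U s t tau x'). split; [|exact Hxz].
  exists s, t, (tau + m), (U s (tau + m) tau x').
  split; [lra|]. split.
  - apply Hte; [lra|exact Hx'].
  - apply (proj2 (HU s)); lra.
Qed.

Lemma omega_absorbing_Astar (B : X -> Prop) :
  mbounded X B -> unif_absorbing X Sig U B ->
  forall x, omega X Sig U B x <-> Astar X Sig U x.
Proof.
  intros HB Habs x. split; [apply omega_Astar, HB|].
  intros Hx. destruct (Astar_omega_initial_data x Hx) as [C [HC HxC]].
  exact (omega_sub_omega_absorbing B C Habs HC x HxC).
Qed.

End OmegaLimits.

Theorem lemma2p6 (X : MetricSpace) (Sig : MetricSpace)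
  (U : Sig -> R -> R -> X -> X) (HU : is_process_family X Sig U) :
  (* (i) *)
  (forall K : X -> Prop, mclosed X K -> unif_attracting X Sig U K ->
     forall x, Astar X Sig U x -> K x) /\
  (* (ii) *)
  (forall C : X -> Prop, mbounded X C ->
     forall x, omega X Sig U C x -> Astar X Sig U x) /\
  (forall x, Astar X Sig U x <-> exists C, mbounded X C /\ omega X Sig U C x) /\
  (* (iii) *)
  (unif_dissipative X Sig U ->
     (forall B : X -> Prop, mbounded X B -> unif_absorbing X Sig U B ->
        forall C : X -> Prop, mbounded X C ->
          (forall x, omega X Sig U C x -> omega X Sig U B x) /\
          (forall x, omega X Sig U B x <-> Astar X Sig U x)) /\
     mclosed X (Astar X Sig U)).
Proof.
  split; [|split; [|split]].
  - intros K HK Hatt x Hx.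
    destruct (Astar_omega_initial_data X Sig U x Hx) as [C [HC HxC]].
    exact (omega_sub_attracting X Sig U K C HK Hatt HC x HxC).
  - exact (omega_Astar X Sig U).
  - intro x. split; [apply Astar_omega_initial_data|].
    intros [C [HC Hx]]. exact (omega_Astar X Sig U C HC x Hx).
  - intros [B0 [HB0 Habs0]]. split.
    + intros B HB Habs C HC. split.
      * exact (omega_sub_omega_absorbing X Sig U HU B C Habs HC).
      * exact (omega_absorbing_Astar X Sig U HU B HB Habs).
    + apply (mclosed_iff X (omega X Sig U B0)).
      * exact (omega_absorbing_Astar X Sig U HU B0 HB0 Habs0).
      * apply omega_mclosed.
Qed.
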